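(* Let $\mathcal T,\Omega>0$ and $N_1,N_2\in\mathbb N$, and set $L_1:=2N_1+1$, $L_2:=2N_2+1$. Let $$w(x)=\sum_{k=-N_1}^{N_1}w_k\,\mathrm e^{2\pi i\frac{\Omega kx}{L_1}},\qquad x\in\mathbb R,$$ with $w_k\in\mathbb C$, be an $\frac{L_1}{\Omega}$-periodic trigonometric polynomial. Then for all $\tau,\nu\in\mathbb R$ and all $x_j=\frac{\mathcal T j}{L_2}$, $j=-N_2,\dots,N_2$, $$\mathrm e^{2\pi i\nu x_j}\,w(x_j-\tau)=\sum_{u=-N_1}^{N_1}\sum_{v=-N_2}^{N_2}\mathrm e^{2\pi i\frac{x_jv}{\mathcal T}}\,w\Big(x_j-\frac{u}{\Omega}\Big)\,a(\tau,\nu)_{(u,v)},$$ where $$a(\tau,\nu)_{(u,v)}:=\frac{1}{L_1L_2}\,D_{N_1}\Big(\frac{u-\Omega\tau}{L_1}\Big)\,D_{N_2}\Big(\frac{v-\mathcal T\nu}{L_2}\Big),\qquad u=-N_1,\dots,N_1,\ v=-N_2,\dots,N_2.$$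
   Context: For $N\in\mathbb N$, $D_N(x)=\sum_{k=-N}^{N}\mathrm e^{2\pi ikx}$ is the $N$th Dirichlet kernel. The left-hand side is $(M_\nu T_\tau w)(x_j)$, where $T_\tau f(x)=f(x-\tau)$ and $M_\nu f(x)=f(x)\mathrm e^{2\pi i\nu x}$. *)

From mathcomp Require Import all_boot all_order all_algebra.
From mathcomp Require Import all_classical all_reals all_analysis.
From mathcomp Require Import complex.
Set Implicit Arguments. Unset Strict Implicit. Unset Printing Implicit Defensive.
Import Order.TTheory GRing.Theory Num.Theory.
Local Open Scope ring_scope.
Local Open Scope complex_scope.

Definition cexp2pi (R : realType) (t : R) : R[i] :=
  (cos (2 * pi * t))%:C + 'i * (sin (2 * pi * t))%:C.

Definition zsum (R : realType) (N : nat) (F : int -> R[i]) : R[i] :=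
  \sum_(0 <= k < (2 * N).+1) F (k%:Z - N%:Z).

Definition dirichlet (R : realType) (N : nat) (x : R) : R[i] :=
  zsum N (fun k => cexp2pi (k%:~R * x)).

Definition trigpoly (R : realType) (Omega : R) (N1 : nat) (wk : int -> R[i]) (x : R)
  : R[i] :=
  zsum N1 (fun k => wk k * cexp2pi (Omega * k%:~R * x / ((2 * N1).+1)%:R)).

Definition acoef (R : realType) (T Omega : R) (N1 N2 : nat) (tau nu : R) (u v : int)
  : R[i] :=
  let L1 : R := ((2 * N1).+1)%:R in
  let L2 : R := ((2 * N2).+1)%:R in
  ((L1 * L2)^-1)%:C * dirichlet N1 ((u%:~R - Omega * tau) / L1)
    * dirichlet N2 ((v%:~R - T * nu) / L2).

From mathcomp Require Import all_boot all_order all_algebra.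
From mathcomp Require Import all_classical all_reals all_analysis complex.
From mathcomp Require Import ring lra zify.
Import Order.TTheory GRing.Theory Num.Theory.
Local Open Scope ring_scope.
Local Open Scope complex_scope.

(* Write e(t) = exp(2 pi i t).  The right-hand side factors into a sum over u
   times a sum over v, and each factor is an instance of Dirichlet-kernel
   interpolation: with L = 2N + 1, a trigonometric polynomial
   p(t) = sum_{|k| <= N} c_k e(k t / L) satisfies
   L p(s) = sum_{|u| <= N} p(u) D_N((u - s) / L), because
   sum_{|u| <= N} e(d u / L) = L [d = 0] whenever |d| <= 2N.  The u-factor
   applies this to t |-> w(x_j - t / Omega) at s = Omega tau, the v-factor to
   the single frequency t |-> e(j t / L_2) at s = T nu. *)

Section ExpTwoPi.
Variable R : realType.
Local Notation e := (@cexp2pi R).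

Lemma cexp2piE (t : R) : e t = (cos (2 * pi * t) +i* sin (2 * pi * t)).
Proof. by rewrite /cexp2pi; simpc. Qed.

Lemma cexp2piD (a b : R) : e (a + b) = e a * e b.
Proof. by rewrite !cexp2piE; simpc; rewrite mulrDr cosD sinD; congr (_ +i* _); ring. Qed.

Lemma cexp2pi0 : e 0 = 1.
Proof. by rewrite cexp2piE mulr0 cos0 sin0. Qed.

Lemma cexp2piMn (n : nat) (a : R) : e (n%:R * a) = e a ^+ n.
Proof.
elim: n => [|n IHn]; first by rewrite mul0r cexp2pi0.
by rewrite exprS -IHn -cexp2piD mulrSr mulrDl mul1r addrC.
Qed.

Lemma cexp2pi_int (n : int) : e n%:~R = 1.
Proof.
have cexp2pi_nat (m : nat) : e m%:R = 1.
  have two_pi_m : 2 * pi * m%:R = 0 + (pi *+ 2) *+ m :> R.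
    by rewrite add0r; ring.
  rewrite cexp2piE two_pi_m (periodicn (@cosD2pi R)) (periodicn (@sinD2pi R)).
  by rewrite cos0 sin0.
case: n => m; first exact: cexp2pi_nat.
have := cexp2pi_nat m.+1; rewrite NegzE intrN !cexp2piE mulrN cosN sinN => -[-> ->].
by rewrite oppr0.
Qed.

Lemma cexp2pi_neq1 (t : R) : 0 < `|t| < 1 -> e t != 1.
Proof.
move=> /andP[t_gt0 t_lt1]; apply/eqP; rewrite cexp2piE => -[cos_eq1 _].
have sin_gt0 : 0 < sin (pi * `|t|).
  by apply: sin_gt0_pi; rewrite mulr_gt0 ?pi_gt0 //= gtr_pMr ?pi_gt0.
have : cos ((pi * `|t|) *+ 2) = 1.
  have -> : (pi * `|t|) *+ 2 = `|2 * pi * t|.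
    by rewrite normrM gtr0_norm ?mulr_gt0 ?pi_gt0 //; ring.
  by rewrite cos_norm.
rewrite cos_mulr2n cos2sin2; nra.
Qed.

End ExpTwoPi.

Section IntegerRangeSums.
Variable R : realType.
Implicit Types (N M : nat) (F G : int -> R[i]).

Lemma eq_zsum_in N F G : (forall k : int, (`|k| <= N)%N -> F k = G k) ->
  zsum N F = zsum N G.
Proof. by move=> FG; apply: eq_big_nat => i /andP[_ iL]; apply: FG; lia. Qed.

Lemma zsumMl N (c : R[i]) F : c * zsum N F = zsum N (fun k => c * F k).
Proof. by rewrite /zsum big_distrr. Qed.

Lemma zsumMr N F (c : R[i]) : zsum N F * c = zsum N (fun k => F k * c).
Proof. by rewrite /zsum big_distrl. Qed.

Lemma zsumM N M F G :
  zsum N F * zsum M G = zsum N (fun u => zsum M (fun v => F u * G v)).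
Proof. by rewrite /zsum big_distrl; apply: eq_bigr => u _; rewrite big_distrr. Qed.

Lemma exchange_zsum N M (F : int -> int -> R[i]) :
  zsum N (fun u => zsum M (F u)) = zsum M (fun v => zsum N (fun u => F u v)).
Proof. exact: exchange_big. Qed.

Lemma zsumN N F : zsum N (fun k => F (- k)) = zsum N F.
Proof.
rewrite /zsum [RHS]big_nat_rev; apply: eq_big_nat => i /andP[_ iL].
by congr F; lia.
Qed.

Lemma zsum_delta N (j : int) F : (`|j| <= N)%N ->
  zsum N (fun k => (k == j)%:R * F k) = F j.
Proof.
move=> jN; rewrite /zsum (eq_big_nat _ _ (F2 := fun i =>
  if i == absz (j + N%:Z) then F j else 0)); last first.
  move=> i /andP[_ iL]; have [<-|ne] := eqVneq (i%:Z - N%:Z) j.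
    by rewrite mul1r ifT //; apply/eqP; lia.
  by rewrite mul0r ifF //; apply/eqP; lia.
by rewrite -big_mkcond big_nat1_eq ifT //; lia.
Qed.

End IntegerRangeSums.

Section DirichletKernel.
Variable R : realType.
Local Notation e := (@cexp2pi R).
Local Notation L N := ((2 * N).+1)%:R.

Lemma zsum_cexp2pi_orthogonal N (d : int) : (`|d| <= 2 * N)%N ->
  zsum N (fun u => e (d%:~R * u%:~R / L N)) = (d == 0)%:R * L N.
Proof.
move=> dN; have L0 : L N != 0 :> R by rewrite pnatr_eq0.
have [->|d0] := eqVneq d 0.
  under eq_zsum_in => u _ do rewrite mulr0z !mul0r cexp2pi0.
  by rewrite /zsum sumr_const_nat subn0 mul1r.
set z := e (d%:~R / L N).
have shift_term (i : nat) :
    e (d%:~R * (i%:Z - N%:Z)%:~R / L N) = e (- (d%:~R * N%:R / L N)) * z ^+ i.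
  by rewrite -cexp2piMn -cexp2piD; congr e; rewrite intrB; field.
rewrite /zsum (eq_bigr _ (fun i _ => shift_term i)) -big_distrr big_mkord /=.
have zL : z ^+ (2 * N).+1 = 1 by rewrite /z -cexp2piMn mulrC divfK // cexp2pi_int.
have z_neq1 : z != 1.
  apply: cexp2pi_neq1; rewrite normrM normfV normr_nat -intr_norm -natr_absz.
  rewrite divr_gt0 ?ltr0n ?absz_gt0 //= ltr_pdivrMr ?ltr0n // mul1r ltr_nat.
  by rewrite ltnS.
have : (z - 1) * \sum_(i < (2 * N).+1) z ^+ i = 0 by rewrite -subrX1 zL subrr.
move/eqP; rewrite mulf_eq0 subr_eq0 (negPf z_neq1) /= => /eqP ->.
by rewrite mulr0 mul0r.
Qed.

Lemma dirichlet_reproduces_cexp2pi N (k : int) (s : R) : (`|k| <= N)%N ->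
  zsum N (fun u => e (k%:~R * u%:~R / L N) * dirichlet N ((u%:~R - s) / L N)) =
  L N * e (k%:~R * s / L N).
Proof.
move=> kN; have L0 : L N != 0 :> R by rewrite pnatr_eq0.
transitivity (zsum N (fun m =>
    e (- (m%:~R * s / L N)) * zsum N (fun u => e ((m + k)%:~R * u%:~R / L N)))).
  under eq_zsum_in => u _ do rewrite /dirichlet zsumMl.
  rewrite exchange_zsum; apply: eq_zsum_in => m _.
  rewrite zsumMl; apply: eq_zsum_in => u _.
  by rewrite -!cexp2piD; congr e; rewrite intrD; field.
rewrite (@eq_zsum_in R N _ (fun m => (m == - k)%:R * (L N * e (- (m%:~R * s / L N))))).
  by rewrite zsum_delta ?abszN // intrN mulNr mulNr opprK.
move=> m mN; rewrite zsum_cexp2pi_orthogonal; last by lia.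
by rewrite addr_eq0; ring.
Qed.

Lemma trigpoly_sampling (Omega : R) N (c : int -> R[i]) (s : R) : Omega != 0 ->
  zsum N (fun u => trigpoly Omega N c (u%:~R / Omega) *
                   dirichlet N ((u%:~R - Omega * s) / L N)) =
  L N * trigpoly Omega N c s.
Proof.
move=> Omega0; have L0 : L N != 0 :> R by rewrite pnatr_eq0.
transitivity (zsum N (fun k => c k * zsum N (fun u =>
    e (k%:~R * u%:~R / L N) * dirichlet N ((u%:~R - Omega * s) / L N)))).
  under eq_zsum_in => u _ do rewrite /trigpoly zsumMr.
  rewrite exchange_zsum; apply: eq_zsum_in => k _.
  rewrite zsumMl; apply: eq_zsum_in => u _.
  rewrite mulrA; congr (_ * cexp2pi (_ / _) * _).
  by rewrite mulrC mulrA divfK // mulrC.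
rewrite /trigpoly zsumMl; apply: eq_zsum_in => k kN.
rewrite dirichlet_reproduces_cexp2pi // mulrCA; congr (_ * (_ * cexp2pi _)); ring.
Qed.

Lemma trigpoly_reflect (Omega : R) N (c : int -> R[i]) (x t : R) :
  trigpoly Omega N c (x - t) =
  trigpoly Omega N (fun k => c (- k) * e (- (Omega * k%:~R * x / L N))) t.
Proof.
rewrite /trigpoly -zsumN; apply: eq_zsum_in => k _.
by rewrite -[RHS]mulrA -cexp2piD intrN; congr (_ * cexp2pi _); ring.
Qed.

End DirichletKernel.

Theorem theorem3 (R : realType) (T Omega : R) (N1 N2 : nat) (wk : int -> R[i])
  (hT : 0 < T) (hOmega : 0 < Omega) (tau nu : R) (j : int)
  (hj : (- N2%:Z <= j <= N2%:Z)%R) :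
  let L2 : R := ((2 * N2).+1)%:R in
  let xj : R := T * j%:~R / L2 in
  let w := trigpoly Omega N1 wk in
  cexp2pi (nu * xj) * w (xj - tau) =
  zsum N1 (fun u => zsum N2 (fun v =>
     cexp2pi (xj * v%:~R / T) * w (xj - u%:~R / Omega)
       * acoef T Omega N1 N2 tau nu u v)).
Proof.
move=> L2 xj w.
have jN2 : (`|j| <= N2)%N by case/andP: hj; lia.
have sample_w : zsum N1 (fun u => w (xj - u%:~R / Omega) *
    dirichlet N1 ((u%:~R - Omega * tau) / ((2 * N1).+1)%:R)) =
    ((2 * N1).+1)%:R * w (xj - tau).
  rewrite /w trigpoly_reflect -trigpoly_sampling ?gt_eqF //.
  by apply: eq_zsum_in => u _; rewrite trigpoly_reflect.
have sample_modulation : zsum N2 (fun v => cexp2pi (xj * v%:~R / T) *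
    dirichlet N2 ((v%:~R - T * nu) / L2)) = ((2 * N2).+1)%:R * cexp2pi (nu * xj).
  have xjT : xj / T = j%:~R / L2 by rewrite /xj mulrAC [T * _]mulrC mulfK ?gt_eqF.
  have -> : nu * xj = j%:~R * (T * nu) / L2 by rewrite /xj; ring.
  rewrite -dirichlet_reproduces_cexp2pi //; apply: eq_zsum_in => v _.
  by rewrite mulrAC xjT mulrAC.
transitivity (((2 * N1).+1 * (2 * N2).+1)%:R^-1 *
  (zsum N1 (fun u => w (xj - u%:~R / Omega) *
     dirichlet N1 ((u%:~R - Omega * tau) / ((2 * N1).+1)%:R)) *
   zsum N2 (fun v => cexp2pi (xj * v%:~R / T) *
     dirichlet N2 ((v%:~R - T * nu) / L2)))).
  rewrite sample_w sample_modulation mulrACA -natrM mulKf ?pnatr_eq0 //.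
  exact: mulrC.
rewrite zsumM zsumMl; apply: eq_zsum_in => u _.
rewrite zsumMl; apply: eq_zsum_in => v _.
rewrite /acoef -natrM fmorphV rmorph_nat; ring.
Qed.
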